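(* Let $n\ge 3$ and $m\ge 1$ be integers, and let $Q_{n,1},\dots,Q_{n,m}$ be the partition of $\{0,1,\dots,m+1\}^n$ defined below. Then for every $1\le i<j\le m$ and every unit vector $v\in\mathbb{Z}^n$ parallel to a coordinate axis, $Q_{n,i}+(m+2)v$ and $Q_{n,j}$ are adjacent (the partition is externally adjacent).
   Context: Define $f:\{0,\dots,m+1\}^3\to\{1,\dots,m\}$ by: $f(x,y,z)=y$ if $0\le x\le m$, $1\le y\le m$, $z=0$; $f=x$ if $1\le x\le m$, $0\le y\le m$, $z=m+1$; $f=y$ if $x=0$, $1\le y\le m$, $1\le z\le m$; $f=x$ if $1\le x\le m$, $y=0$, $1\le z\le m$; $f=z$ if $1\le x\le m+1$, $1\le y\le m+1$, $1\le z\le m$; and $f=1$ at all remaining points. Let $f_3=f$ and for $n\ge4$: $f_n(x_1,\dots,x_n)=f_{n-1}(x_1,x_2,x_3,\dots,x_{n-1})$ if $0\le x_n\le m$, and $f_n(x_1,\dots,x_n)=f_{n-1}(m+1-x_2,x_1,x_3,\dots,x_{n-1})$ if $x_n=m+1$. Let $Q_{n,i}=\{x\in\{0,\dots,m+1\}^n: f_n(x)=i\}$. Two disjoint sets $P,Q\subset\mathbb{Z}^n$ are adjacent if there exist $p\in P$, $q\in Q$ and a unit vector $v$ parallel to a coordinate axis with $p+v=q$. *)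

From HB Require Import structures.
From mathcomp Require Import all_boot all_order all_algebra.
Set Implicit Arguments. Unset Strict Implicit. Unset Printing Implicit Defensive.
Import Order.TTheory GRing.Theory Num.Theory.

Definition f3 (m x y z : nat) : nat :=
  if [&& x <= m, 1 <= y <= m & z == 0] then y
  else if [&& 1 <= x <= m, y <= m & z == m.+1] then x
  else if [&& x == 0, 1 <= y <= m & 1 <= z <= m] then y
  else if [&& 1 <= x <= m, y == 0 & 1 <= z <= m] then x
  else if [&& 1 <= x <= m.+1, 1 <= y <= m.+1 & 1 <= z <= m] then z
  else 1.

(* f_k on a point given by its coordinates x 0, x 1, ..., x (k-1)
   (0-based; the paper's x_1 ... x_k). For k <= 3 this is f_3. *)
Fixpoint fN (m k : nat) (x : nat -> nat) : nat :=
  match k with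
  | 0 | 1 | 2 | 3 => f3 m (x 0) (x 1) (x 2)
  | k'.+1 =>
      if x k' <= m then fN m k' x
      else fN m k' (fun j => if j == 0 then m.+1 - x 1
                             else if j == 1 then x 0 else x j)
  end.

(* coordinates of a point of Z^n as a nat sequence (absolute values,
   only used on points with nonnegative coordinates) *)
Definition coords (n : nat) (x : 'rV[int]_n) : nat -> nat :=
  fun j => match @insub nat (fun j => j < n) 'I_n j with
           | Some k => absz (x ord0 k)
           | None => 0
           end.

Definition Qset (n m i : nat) (x : 'rV[int]_n) : Prop :=
  (forall k : 'I_n, (0 <= x ord0 k)%R /\ (x ord0 k <= (m.+1)%:Z)%R) /\ fN m n (coords x) = i.

Arguments Qset n m i x : clear implicits.

Definition axis_unit (n : nat) (v : 'rV[int]_n) : Prop :=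
  exists k : 'I_n, v = delta_mx ord0 k \/ v = (- delta_mx ord0 k)%R.

Definition translate (n : nat) (P : 'rV[int]_n -> Prop) (w : 'rV[int]_n) :
  'rV[int]_n -> Prop := fun x => exists2 p, P p & x = (p + w)%R.

Definition adjacent (n : nat) (P Q : 'rV[int]_n -> Prop) : Prop :=
  (forall x, ~ (P x /\ Q x)) /\
  exists p q v, [/\ P p, Q q, axis_unit v & (p + v)%R = q].

(* Translating Q_{n,i} by (m+2)v, v = e_k, moves its face x_k = 0 exactly one unit
   past the face x_k = m+1 of the box, so it suffices to find a point x with
   x_k = 0 and f_n(x) = i whose copy with x_k = m+1 has f_n = j (for v = -e_k,
   the same with i and j exchanged).  Such points exist for all i, j in [1, m]:
   only x_1, x_2, x_3 are nonzero, so f_n reduces to f_3, possibly after the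
   quarter turn (x_1, x_2) |-> (m+1-x_2, x_1) caused by a coordinate x_k = m+1
   with k >= 4, and one reads the points off the definition of f_3. *)
From mathcomp Require Import all_boot all_order all_algebra.
From mathcomp Require Import zify.
Import GRing.Theory.

Set Implicit Arguments.
Unset Strict Implicit.

Lemma fNS m k x : fN m k.+4 x = if x k.+3 <= m then fN m k.+3 x
  else fN m k.+3 (fun j => if j == 0 then m.+1 - x 1
                           else if j == 1 then x 0 else x j).
Proof. by []. Qed.

Lemma eq_fN m n x y : 3 <= n -> (forall l, l < n -> x l = y l) ->
  fN m n x = fN m n y.
Proof.
case: n => [|[|[|k]]] // _; elim: k x y => [|k IH] x y hxy.
  by rewrite /= !hxy.
rewrite !fNS hxy //.
case: ifP => _; apply: IH => l hl; first by apply: hxy; lia.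
case: ifP => _; first by rewrite hxy.
case: ifP => _; first by rewrite hxy.
apply: hxy; lia.
Qed.

Lemma fN_f3 m n x : 3 <= n -> (forall l, 3 <= l < n -> x l <= m) ->
  fN m n x = f3 m (x 0) (x 1) (x 2).
Proof.
case: n => [|[|[|k]]] // _; elim: k x => [|k IH] x hx //.
rewrite fNS hx; last lia.
apply: IH => l hl; apply: hx; lia.
Qed.

Lemma fN_f3_turn m n x K : 3 <= K < n -> x K = m.+1 ->
  (forall l, 3 <= l < n -> l != K -> x l <= m) ->
  fN m n x = f3 m (m.+1 - x 1) (x 0) (x 2).
Proof.
case: n => [|[|[|k]]]; try lia.
elim: k x => [|k IH] x hK hxK hx; first lia.
rewrite fNS; case: (eqVneq K k.+3) => [eK|nK].
  rewrite -{1}eK hxK ltnn fN_f3 // => l hl.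
  rewrite !ifN; [apply: hx|..]; lia.
rewrite hx; [|lia|lia].
apply: IH => // [|l hl hlK]; [lia | apply: hx; lia].
Qed.

Definition setc (x : nat -> nat) (K t : nat) : nat -> nat :=
  fun l => if l == K then t else x l.

Definition pad3 (a b c : nat) : nat -> nat := nth 0 [:: a; b; c].

Lemma pad3_setc_le m a b c K t l :
  a <= m.+1 -> b <= m.+1 -> c <= m.+1 -> t <= m.+1 ->
  setc (pad3 a b c) K t l <= m.+1.
Proof.
move=> ha hb hc ht; rewrite /setc /pad3.
by case: ifP => // _; case: l => [|[|[|l]]] //=; rewrite nth_nil.
Qed.

Lemma pad3_setc_high a b c K t l : 3 <= l ->
  setc (pad3 a b c) K t l = if l == K then t else 0.
Proof. by move=> hl; rewrite /setc /pad3 nth_default. Qed.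

Lemma fN_pad3 m n a b c K t : 3 <= n -> (K < 3) || (t <= m) ->
  let x := setc (pad3 a b c) K t in fN m n x = f3 m (x 0) (x 1) (x 2).
Proof.
move=> hn hKt; apply: fN_f3 => // l hl.
rewrite pad3_setc_high; [case: eqP|]; lia.
Qed.

Lemma fN_pad3_turn m n a b c K : 3 <= K < n ->
  fN m n (setc (pad3 a b c) K m.+1) = f3 m (m.+1 - b) a c.
Proof.
move=> hK; rewrite (@fN_f3_turn _ _ _ K) //; last 2 first.
- by rewrite /setc eqxx.
- by move=> l hl /negbTE hlK; rewrite pad3_setc_high ?hlK; lia.
by rewrite /setc !ifN //; lia.
Qed.

Definition natrow n (x : nat -> nat) : 'rV[int]_n := \row_(l < n) (x l)%:Z%R.

Lemma coords_natrow n x l : l < n -> coords (natrow n x) l = x l.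
Proof.
move=> hl; rewrite /coords; case: insubP => [u _ eu|]; last by rewrite hl.
by rewrite mxE -eu.
Qed.

Lemma Qset_natrow n m i x : 3 <= n -> (forall l, x l <= m.+1) ->
  fN m n x = i -> Qset n m i (natrow n x).
Proof.
move=> hn hx hf; split=> [k|]; first by rewrite mxE; have := hx k; lia.
by rewrite -hf; apply: eq_fN => // l; apply: coords_natrow.
Qed.

Ltac f3_eval := rewrite /setc /pad3 /f3 /=; repeat case: ifP; lia.

Lemma Qset_face n m i j (k : 'I_n) : 3 <= n ->
  1 <= i <= m -> 1 <= j <= m ->
  exists x, Qset n m i (natrow n (setc x k 0)) /\
            Qset n m j (natrow n (setc x k m.+1)).
Proof.
move=> hn hi hj.
suff [a [b [c [ha hb hc hx0 hx1]]]] : exists a b c,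
    [/\ a <= m.+1, b <= m.+1, c <= m.+1,
        fN m n (setc (pad3 a b c) k 0) = i &
        fN m n (setc (pad3 a b c) k m.+1) = j].
  by exists (pad3 a b c); split; apply: Qset_natrow => // l;
    apply: pad3_setc_le.
case: k => [[|[|[|K]]] hK] /=.
- by exists 0, i, j; split; try lia; rewrite fN_pad3 //=; f3_eval.
- by exists i, 0, j; split; try lia; rewrite fN_pad3 //=; f3_eval.
- by exists j, i, 0; split; try lia; rewrite fN_pad3 //=; f3_eval.
- exists j, i, 0; split; try lia.
    by rewrite fN_pad3 //=; f3_eval.
  by rewrite fN_pad3_turn //; f3_eval.
Qed.

Lemma natrow_setc n x (k : 'I_n) t :
  natrow n (setc x k t) = (natrow n (setc x k 0) + delta_mx ord0 k *+ t)%R.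
Proof.
apply/rowP => l; rewrite !mxE mulmxnE mxE eqxx /setc.
case: (eqVneq l k) => [->|nlk]; first by rewrite !eqxx /=; lia.
have /negbTE -> : (l : nat) != k by [].
by rewrite /=; lia.
Qed.

Lemma axis_unitN n (v : 'rV[int]_n) : axis_unit v -> axis_unit (- v)%R.
Proof. by case=> k [->|->]; exists k; [right|left; rewrite opprK]. Qed.

Definition in_box n m (x : 'rV[int]_n) : Prop :=
  forall k : 'I_n, (0 <= x ord0 k)%R /\ (x ord0 k <= (m.+1)%:Z)%R.

Lemma translate_box_disjoint n m (P Q : 'rV[int]_n -> Prop) v :
  axis_unit v -> (forall x, P x -> in_box m x) -> (forall x, Q x -> in_box m x) ->
  forall x, ~ (translate P (v *+ m.+2)%R x /\ Q x).
Proof.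
move=> [k hv] hP hQ x [[p /hP hp ->] /hQ hq].
have := hp k; have := hq k.
by case: hv => ->; rewrite mxE mulmxnE !mxE !eqxx /=; lia.
Qed.

Lemma adjacent_translate n (P Q : 'rV[int]_n -> Prop) v d p :
  axis_unit v -> (forall x, ~ (translate P (v *+ d.+1)%R x /\ Q x)) ->
  P p -> Q (p + v *+ d)%R -> adjacent (translate P (v *+ d.+1)%R) Q.
Proof.
move=> hv disj hp hq; split=> //.
exists (p + v *+ d.+1)%R, (p + v *+ d)%R, (- v)%R; split.
- by exists p.
- exact: hq.
- exact: axis_unitN.
- by rewrite mulrSr addrA addrK.
Qed.

Theorem lemma5p4 (n m : nat) (hn : 3 <= n) (hm : 1 <= m) (i j : nat)
  (hij : [&& 1 <= i, i < j & j <= m]) (v : 'rV[int]_n) (hv : axis_unit v) :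
  adjacent (translate (Qset n m i) (v *+ m.+2)%R) (Qset n m j).
Proof.
have [ri rj] : 1 <= i <= m /\ 1 <= j <= m by case/and3P: hij; lia.
have hbox l x : Qset n m l x -> in_box m x by case.
have disj := translate_box_disjoint hv (hbox i) (hbox j).
have [k [ev|ev]] := hv.
- have [x [hP hQ]] := Qset_face k hn ri rj.
  by apply: adjacent_translate hv disj hP _; rewrite ev -natrow_setc.
- have [x [hQ hP]] := Qset_face k hn rj ri.
  by apply: adjacent_translate hv disj hP _; rewrite ev natrow_setc mulNrn addrK.
Qed.
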